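(* Let $\mathbf L=\{L_1,\dots,L_n\}$ be a finite multiset of positive rationals indexed so that $L_1\ge L_2\ge\cdots\ge L_n$, let $k\in\mathbb N_{>0}$, and suppose $L_{co}\ne l^\star$. Then $(I_{co},\,i\mapsto 1,\,i\mapsto\lceil k/i\rceil)$ is an admissible restriction. Moreover $|\mathcal C(I_{co},1,\lceil k/i\rceil)|=\sum_{i\in I_{co}}\lceil k/i\rceil$, and in the worst case (pairwise distinct lengths, where $|I_{co}|=\min(k-1,n)$) this is $\Theta\bigl(k\log\min(k,n)\bigr)$.
   Context: $m(l)=\sum_{i=1}^n\lfloor L_i/l\rfloor$, $c(l)=\sum_i(\lceil L_i/l\rceil-1)$; $l$ feasible iff $m(l)\ge k$; $l^\star$ is the unique optimal cut length (feasible length minimizing $c$ among feasible lengths; equals the largest feasible length). $L^{(k)}$ is the $k$-th largest element of $\mathbf L$ with multiplicity; $L_{co}=L^{(k)}$ if $k\le n$, $L_{co}=0$ if $k>n$; $I_{co}=\{i: L_i>L_{co}\}$. Candidate multiset $\mathcal C(I,f_l,f_u)=\biguplus_{i\in I}\{L_i/j: j\in\mathbb N,\ f_l(i)\le j\le f_u(i)\}$ (one occurrence per pair). A triple $(I,f_l,f_u)$ with $f_l,f_u:I\to\mathbb N_{>0}$ is an admissible restriction if (i) for all $i\in I$, $f_l(i)=1$ or $L_i/(f_l(i)-1)$ is infeasible; (ii) for all $i\in I$, $L_i/f_u(i)$ is feasible; (iii) for all $i'\notin I$, $L_{i'}$ is feasible and $L_{i'}\ne l^\star$. *)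

From HB Require Import structures.
From mathcomp Require Import all_boot all_order all_algebra.
Set Implicit Arguments. Unset Strict Implicit. Unset Printing Implicit Defensive.
Import Order.TTheory GRing.Theory Num.Theory.
Local Open Scope ring_scope.

(* The multiset L = {L_1,...,L_n} is the sequence L (n = size L);
   indices are 1-based: L_i = nth 0 L (i-1), for 1 <= i <= n. *)
Definition Li (L : seq rat) (i : nat) : rat := nth 0 L i.-1.

Definition mcount (L : seq rat) (l : rat) : int := \sum_(x <- L) Num.floor (x / l).

Definition ccost (L : seq rat) (l : rat) : int := \sum_(x <- L) (Num.ceil (x / l) - 1).

Definition feasible (L : seq rat) (k : nat) (l : rat) : bool :=
  (0 < l) && ((k%:Z) <= mcount L l).

Definition is_opt_length (L : seq rat) (k : nat) (ls : rat) : Prop :=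
  feasible L k ls /\ forall l, feasible L k l -> l <= ls.

(* L_co = L^(k) (k-th largest, L sorted nonincreasing) if k <= n, 0 otherwise *)
Definition Lco (L : seq rat) (k : nat) : rat :=
  if (k <= size L)%N then Li L k else 0.

Definition Ico (L : seq rat) (k : nat) : pred nat :=
  fun i => [&& (1 <= i)%N, (i <= size L)%N & Lco L k < Li L i].

Definition cdivn (k i : nat) : nat := ((k + i.-1) %/ i)%N.

(* Admissible restriction (I, f_l, f_u), with I a subset of {1..n},
   f_l, f_u : I -> N_{>0}; ls is the optimal cut length l*. *)
Definition admissible (L : seq rat) (k : nat) (ls : rat)
    (I : pred nat) (fl fu : nat -> nat) : Prop :=
  [/\ (forall i, I i -> (1 <= i <= size L)%N),
      (forall i, I i -> (0 < fl i)%N /\ (0 < fu i)%N),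
      (forall i, I i -> fl i = 1%N \/ ~~ feasible L k (Li L i / (fl i).-1%:R)),
      (forall i, I i -> feasible L k (Li L i / (fu i)%:R))
    & (forall i', (1 <= i' <= size L)%N -> ~~ I i' ->
         feasible L k (Li L i') /\ Li L i' <> ls)].

(* Candidate multiset C(I, f_l, f_u): one entry L_i / j per pair (i, j),
   i in I, f_l(i) <= j <= f_u(i); represented as a sequence. *)
Definition cands (L : seq rat) (I : pred nat) (fl fu : nat -> nat) : seq rat :=
  flatten [seq [seq Li L i / j%:R | j <- iota (fl i) ((fu i).+1 - fl i)]
          | i <- iota 1 (size L) & I i].

From HB Require Import structures.
From mathcomp Require Import all_boot all_order all_algebra.
From mathcomp Require Import zify lra.
Set Implicit Arguments.
Unset Strict Implicit.

Import Order.TTheory GRing.Theory Num.Theory.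
Local Open Scope ring_scope.

(* The length L_i / ⌈k/i⌉ is feasible: each of the i longest pieces has length
   at least L_i and so yields ⌈k/i⌉ copies, i·⌈k/i⌉ >= k in total.  An index
   outside I_co has L_i <= L^(k), and L^(k) is feasible, hence so is L_i; and
   L_i = l* would give l* <= L^(k) <= l*, i.e. L_co = l*.
   For pairwise distinct lengths I_co = {1, ..., min(k-1, n)}, and the sum of
   ⌈k/i⌉ over a dyadic block 2^s <= i < 2^(s+1) lies between k/2 and 3k, so
   the first M terms sum to Θ(k log M). *)

Section CeilDiv.
Local Open Scope nat_scope.

Lemma leq_cdivn k i : 0 < i -> k <= i * cdivn k i.
Proof.
move=> i_gt0; rewrite /cdivn mulnC.
have := divn_eq (k + i.-1) i; have := ltn_mod (k + i.-1) i; rewrite i_gt0.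
move: (_ %/ _) (_ %% _) => q r; lia.
Qed.

Lemma cdivn_le k i : 0 < i -> i * cdivn k i <= k + i.-1.
Proof.
move=> i_gt0; rewrite /cdivn mulnC.
have := divn_eq (k + i.-1) i; move: (_ %/ _) (_ %% _) => q r; lia.
Qed.

Lemma cdivn_gt0 k i : 0 < k -> 0 < i -> 0 < cdivn k i.
Proof. by move=> k_gt0 /(leq_cdivn k); case: (cdivn k i); rewrite ?muln0; lia. Qed.

Definition cdivn_sum k m n := \sum_(m <= i < n) cdivn k i.

Lemma cdivn_sum_mono k a b : 1 <= a <= b -> cdivn_sum k 1 a <= cdivn_sum k 1 b.
Proof.
by case/andP=> a_ge1 a_le; rewrite /cdivn_sum (big_cat_nat a_ge1 a_le) leq_addr.
Qed.

Lemma cdivn_sum_pow2S k s :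
  cdivn_sum k 1 (2 ^ s.+1) = cdivn_sum k 1 (2 ^ s) + cdivn_sum k (2 ^ s) (2 ^ s.+1).
Proof. by rewrite /cdivn_sum -big_cat_nat // ?expn_gt0 // leq_exp2l. Qed.

Lemma cdivn_sum_dyadic_ge k s : k <= 2 * cdivn_sum k (2 ^ s) (2 ^ s.+1).
Proof.
rewrite -(leq_pmul2l (expn_gt0 2 s)) mulnA -expnSr /cdivn_sum big_distrr /=.
have -> : 2 ^ s * k = \sum_(2 ^ s <= i < 2 ^ s.+1) k.
  by rewrite sum_nat_const_nat expnS; congr (_ * _); lia.
rewrite !big_nat; apply: leq_sum => i /andP[i_ge i_lt].
have i_gt0 : 0 < i by apply: leq_trans i_ge; rewrite expn_gt0.
by rewrite (leq_trans (leq_cdivn k i_gt0)) // leq_mul2r ltnW ?orbT.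
Qed.

Lemma cdivn_sum_dyadic_le k s :
  2 ^ s <= k -> cdivn_sum k (2 ^ s) (2 ^ s.+1) <= 3 * k.
Proof.
move=> pow_le; rewrite -(leq_pmul2l (expn_gt0 2 s)) /cdivn_sum big_distrr /=.
apply: (@leq_trans (\sum_(2 ^ s <= i < 2 ^ s.+1) (k + 2 ^ s.+1))).
  rewrite !big_nat; apply: leq_sum => i /andP[i_ge i_lt].
  have i_gt0 : 0 < i by apply: leq_trans i_ge; rewrite expn_gt0.
  apply: leq_trans (leq_trans (cdivn_le k i_gt0) _); last by lia.
  by rewrite leq_mul2r i_ge orbT.
rewrite sum_nat_const_nat expnS.
have -> : 2 * 2 ^ s - 2 ^ s = 2 ^ s by lia.
by rewrite leq_pmul2l ?expn_gt0 //; lia.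
Qed.

Lemma cdivn_sum_pow2_ge k s : s * k <= 2 * cdivn_sum k 1 (2 ^ s).
Proof.
elim: s => [|s IH]; first by rewrite mul0n.
have := cdivn_sum_dyadic_ge k s; rewrite cdivn_sum_pow2S; lia.
Qed.

Lemma cdivn_sum_pow2_le k s : 2 ^ s <= 2 * k -> cdivn_sum k 1 (2 ^ s) <= 3 * k * s.
Proof.
elim: s => [|s IH] pow_le; first by rewrite /cdivn_sum big_geq.
have pow_le' : 2 ^ s <= k by move: pow_le; rewrite expnS; lia.
have := cdivn_sum_dyadic_le pow_le'; have := IH (leq_trans pow_le' (leq_addr _ _)).
rewrite cdivn_sum_pow2S mulnS; lia.
Qed.

(* Instantiated with [M = min(k, n)] and [m = min(k-1, n)] = |I_co|. *)
Lemma cdivn_sum_log_bounds k M m :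
  1 < M -> M <= k -> M <= m.+1 -> m <= M ->
  trunc_log 2 M * k <= 2 * cdivn_sum k 1 m.+1
  /\ cdivn_sum k 1 m.+1 <= 6 * (k * trunc_log 2 M).
Proof.
move=> M_gt1 M_le_k M_le m_le.
have /andP[pow_le lt_pow] := @trunc_log_bounds 2 M isT (ltnW M_gt1).
set t := trunc_log 2 M in pow_le lt_pow *.
have t_gt0 : 0 < t by rewrite trunc_log_gt0.
split.
  apply: leq_trans (cdivn_sum_pow2_ge k t) _; rewrite leq_mul2l /=.
  by apply: cdivn_sum_mono; rewrite expn_gt0 /=; apply: leq_trans pow_le M_le.
apply: leq_trans (@cdivn_sum_mono k m.+1 (2 ^ t.+1) _) _; first by lia.
apply: leq_trans (@cdivn_sum_pow2_le k t.+1 _) _.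
  by rewrite expnS leq_mul2l /=; apply: leq_trans pow_le M_le_k.
nia.
Qed.

End CeilDiv.

Lemma mcount_ge_prefix (L : seq rat) (l : rat) (j c : nat) :
  all (fun x => 0 < x) L -> 0 < l ->
  (forall x, x \in take j L -> c%:R * l <= x) ->
  (size (take j L) * c)%N%:Z <= mcount L l.
Proof.
move=> L_pos l_gt0 prefix_ge.
have -> : mcount L l = \sum_(x <- take j L) Num.floor (x / l)
                       + \sum_(x <- drop j L) Num.floor (x / l).
  by rewrite /mcount -big_cat cat_take_drop.
have -> : (size (take j L) * c)%N%:Z = \sum_(x <- take j L) c%:Z + 0.
  by rewrite addr0 big_const_seq count_predT iter_addr_0 mulnC PoszM
             -mulr_natr natz.
apply: lerD.
  rewrite !big_seq; apply: ler_sum => x /prefix_ge x_ge.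
  by rewrite floor_ge_int ler_pdivlMr.
rewrite big_seq; apply: sumr_ge0 => x /mem_drop x_in.
by rewrite floor_ge0 divr_ge0 ?ltW //; move/allP: L_pos; apply.
Qed.

Lemma feasible_prefix (L : seq rat) (k j c : nat) (l : rat) :
  all (fun x => 0 < x) L -> 0 < l -> (j <= size L)%N -> (k <= j * c)%N ->
  (forall x, x \in take j L -> c%:R * l <= x) -> feasible L k l.
Proof.
move=> L_pos l_gt0 j_le k_le prefix_ge; rewrite /feasible l_gt0 /=.
apply: le_trans _ (mcount_ge_prefix L_pos l_gt0 prefix_ge).
by rewrite size_takel // lez_nat.
Qed.

Lemma size_cands (L : seq rat) (I : pred nat) (fu : nat -> nat) :
  size (cands L I (fun _ => 1%N) fu)
  = (\sum_(1 <= i < (size L).+1 | I i) fu i)%N.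
Proof.
rewrite /cands size_flatten /shape -map_comp sumnE big_map big_filter.
rewrite /index_iota subSS subn0; apply: eq_bigr => i _ /=.
by rewrite size_map size_iota subn1.
Qed.

Section SortedLengths.

Variable L : seq rat.
Hypothesis L_pos : all (fun x => 0 < x) L.
Hypothesis L_sorted : sorted (fun x y => y <= x) L.

Lemma Li_gt0 i : (1 <= i <= size L)%N -> 0 < Li L i.
Proof.
move=> i_in; have i_lt : (i.-1 < size L)%N by lia.
by move/allP: L_pos; apply; apply: mem_nth.
Qed.

Lemma Li_le j i : (1 <= i <= j)%N -> (j <= size L)%N -> Li L j <= Li L i.
Proof.
move=> i_le j_le.
have ge_trans : transitive (fun x y : rat => y <= x).
  by move=> y x z xy yz; apply: le_trans yz xy.
apply: (sorted_leq_nth ge_trans (fun x => lexx x) 0 L_sorted);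
  rewrite ?inE; lia.
Qed.

Lemma Li_le_take j x : (1 <= j <= size L)%N -> x \in take j L -> Li L j <= x.
Proof.
move=> j_in /(nthP 0) [p]; rewrite size_takel ?(andP j_in).2 // => p_lt <-.
by rewrite nth_take //; apply: (@Li_le j p.+1); lia.
Qed.

Lemma feasible_Li_cdivn k i :
  (0 < k)%N -> (1 <= i <= size L)%N -> feasible L k (Li L i / (cdivn k i)%:R).
Proof.
move=> k_gt0 i_in.
have c_gt0 : (0 < cdivn k i)%N by apply: cdivn_gt0; lia.
apply: (@feasible_prefix L k i (cdivn k i)) => //.
- by rewrite divr_gt0 ?Li_gt0 ?ltr0n.
- by case/andP: i_in.
- by apply: leq_cdivn; lia.
by move=> x /(Li_le_take i_in); rewrite mulrC divfK // pnatr_eq0 -lt0n.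
Qed.

Lemma feasible_le_Li k l :
  (1 <= k <= size L)%N -> 0 < l -> l <= Li L k -> feasible L k l.
Proof.
move=> k_in l_gt0 l_le; apply: (@feasible_prefix L k k 1) => //.
- by case/andP: k_in.
- by rewrite muln1.
by move=> x /(Li_le_take k_in); rewrite mul1r; apply: le_trans.
Qed.

Lemma feasible_notin_Ico k ls i :
  (0 < k)%N -> is_opt_length L k ls -> Lco L k <> ls ->
  (1 <= i <= size L)%N -> ~~ Ico L k i -> feasible L k (Li L i) /\ Li L i <> ls.
Proof.
move=> k_gt0 [_ ls_max] Lco_ne i_in; have Li_pos := Li_gt0 i_in.
case/andP: (i_in) => i_ge i_le; rewrite /Ico i_ge i_le /= -leNgt /Lco in Lco_ne *.
case: leqP => [k_le | _]; last by rewrite leNgt Li_pos.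
rewrite k_le in Lco_ne => Li_le_Lk.
have k_in : (1 <= k <= size L)%N by rewrite k_gt0.
have Lk_feas : feasible L k (Li L k) by apply: feasible_le_Li; rewrite ?lexx ?Li_gt0.
split; first exact: feasible_le_Li.
move=> Li_eq; apply: Lco_ne; apply/le_anti.
by rewrite ls_max //= -Li_eq.
Qed.

Lemma Ico_uniqE k i :
  (0 < k)%N -> uniq L -> Ico L k i = [&& (1 <= i)%N, (i <= size L)%N & (i < k)%N].
Proof.
move=> k_gt0 L_uniq; rewrite /Ico /Lco.
case: (leqP 1 i) => //= i_ge; case: (leqP i (size L)) => //= i_le.
have i_in : (1 <= i <= size L)%N by rewrite i_ge.
case: (leqP k (size L)) => [k_le | lt_k]; last by rewrite Li_gt0 //; apply/esym; lia.
case: (ltnP i k) => [i_lt | k_le_i]; last by apply/negbTE; rewrite -leNgt Li_le ?k_gt0.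
rewrite lt_neqAle Li_le ?i_ge ?(ltnW i_lt) ?andbT //.
have [i1_lt k1_lt] : (i.-1 < size L)%N /\ (k.-1 < size L)%N by lia.
by rewrite /Li nth_uniq //; apply/eqP; lia.
Qed.

Lemma sum_Ico_uniq k (F : nat -> nat) :
  (0 < k)%N -> uniq L ->
  (\sum_(1 <= i < (size L).+1 | Ico L k i) F i
   = \sum_(1 <= i < (minn k.-1 (size L)).+1) F i)%N.
Proof.
move=> k_gt0 L_uniq; set m := minn k.-1 (size L).
rewrite big_mkcond (@big_cat_nat _ _ _ m.+1) //= ?ltnS ?geq_minr //.
have -> : (\sum_(m.+1 <= i < (size L).+1) (if Ico L k i then F i else 0) = 0)%N.
  rewrite big_nat big1 // => i i_in; rewrite Ico_uniqE //.
  by have -> : [&& (1 <= i)%N, (i <= size L)%N & (i < k)%N] = false by lia.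
rewrite addn0; apply: eq_big_nat => i i_in; rewrite Ico_uniqE //.
by have -> : [&& (1 <= i)%N, (i <= size L)%N & (i < k)%N] by lia.
Qed.

Lemma card_Ico_uniq k :
  (0 < k)%N -> uniq L ->
  #|[pred i : 'I_(size L).+1 | Ico L k i]| = minn k.-1 (size L).
Proof.
move=> k_gt0 L_uniq.
rewrite -sum1_card -(big_mkord (fun i => Ico L k i) (fun _ => 1%N)).
rewrite big_mkcond big_ltn //= add0n -big_mkcond sum_Ico_uniq //.
by rewrite sum_nat_const_nat muln1 subn1.
Qed.

End SortedLengths.

Lemma admissible_Ico_cdivn (L : seq rat) (k : nat) (ls : rat) :
  all (fun x => 0 < x) L -> sorted (fun x y => y <= x) L -> (0 < k)%N ->
  is_opt_length L k ls -> Lco L k <> ls ->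
  admissible L k ls (Ico L k) (fun _ => 1%N) (cdivn k).
Proof.
move=> L_pos L_sorted k_gt0 ls_opt Lco_ne.
have Ico_range i : Ico L k i -> (1 <= i <= size L)%N by case/and3P=> -> ->.
split=> [i /Ico_range // | i /Ico_range i_in | i _ | i /Ico_range | i'].
- by split=> //; apply: cdivn_gt0; lia.
- by left.
- exact: feasible_Li_cdivn.
- exact: feasible_notin_Ico.
Qed.

Theorem mainTheorem11 :
  (forall (L : seq rat) (k : nat) (ls : rat),
     all (fun x => 0 < x) L -> sorted (fun x y => y <= x) L -> (0 < k)%N ->
     is_opt_length L k ls -> Lco L k <> ls ->
     admissible L k ls (Ico L k) (fun _ => 1%N) (fun i => cdivn k i)
     /\ size (cands L (Ico L k) (fun _ => 1%N) (fun i => cdivn k i))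
        = (\sum_(1 <= i < (size L).+1 | Ico L k i) cdivn k i)%N)
  /\
  (exists c1 c2 : rat, 0 < c1 /\ 0 < c2 /\
   forall (L : seq rat) (k : nat),
     all (fun x => 0 < x) L -> sorted (fun x y => y <= x) L -> (0 < k)%N ->
     uniq L ->
     #|[pred i : 'I_(size L).+1 | Ico L k i]| = minn k.-1 (size L)
     /\ ((1 < minn k (size L))%N ->
         let S := size (cands L (Ico L k) (fun _ => 1%N) (fun i => cdivn k i)) in
         c1 * (k * trunc_log 2 (minn k (size L)))%:R <= S%:R
         /\ S%:R <= c2 * (k * trunc_log 2 (minn k (size L)))%:R)).
Proof.
split=> [L k ls L_pos L_sorted k_gt0 ls_opt Lco_ne | ].
  by split; [apply: admissible_Ico_cdivn | apply: size_cands].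
exists (1 / 2), 6; do 2!split=> //.
move=> L k L_pos L_sorted k_gt0 L_uniq; split; first exact: card_Ico_uniq.
move=> M_gt1 S; rewrite /S size_cands sum_Ico_uniq // -/(cdivn_sum k 1 _).
have M_le : (minn k (size L) <= (minn k.-1 (size L)).+1)%N by lia.
have m_le : (minn k.-1 (size L) <= minn k (size L))%N by lia.
have := cdivn_sum_log_bounds M_gt1 (geq_minl _ _) M_le m_le.
move: (cdivn_sum _ _ _) (trunc_log _ _) => s t [sum_ge sum_le].
rewrite mulnC -(ler_nat rat) !natrM in sum_ge.
rewrite -(ler_nat rat) !natrM in sum_le.
rewrite natrM; split; lra.
Qed.
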